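(* Let $m,n\in\mathbb{N}$. For $1\le\ell\le m$ let $0<q_{\ell}<1$, $\alpha_{\ell}\ge0$, $r_{\ell},s_{\ell}\in\mathbb{N}_{0}$, and $a_{1,\ell},\dots,a_{r_{\ell},\ell},b_{1,\ell},\dots,b_{s_{\ell},\ell}\in\mathbb{C}$ with \[ \frac{(a_{1,\ell},\dots,a_{r_{\ell},\ell};q_{\ell})_{N}}{(b_{1,\ell},\dots,b_{s_{\ell},\ell};q_{\ell})_{N}}\ge0\quad\text{for all }N\in\mathbb{N}_{0}. \] Let $z_{j,\ell}\in\mathbb{C}$ for $1\le j\le n$, where if $\alpha_{\ell}>0$ the $z_{j,\ell}$ are arbitrary, and if $\alpha_{\ell}=0$ the $z_{j,\ell}$ ($1\le j\le n$) lie in an open disk $\{|z|<R_\ell\}$, $R_\ell<1$, chosen so that the series defining ${}_{r_\ell}A^{(0)}_{s_\ell}$ converges at $w$ whenever $|w|<R_\ell^2$. Then the $n\times n$ matrix \[ \left(\prod_{\ell=1}^{m}{}_{r_{\ell}}A_{s_{\ell}}^{(\alpha_{\ell})}\left(a_{1,\ell},\dots,a_{r_{\ell},\ell};\,b_{1,\ell},\dots,b_{s_{\ell},\ell};\,q_{\ell};\,z_{j,\ell}\overline{z_{k,\ell}}\right)\right)_{j,k=1}^{n} \] is positive semidefinite.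
   Context: For $0<q<1$: $(z;q)_\infty=\prod_{k\ge0}(1-zq^k)$, $(z;q)_N=(z;q)_\infty/(zq^N;q)_\infty$, and $(z_1,\dots,z_r;q)_N=\prod_{i}(z_i;q)_N$. For $\alpha\ge0$, \[ {}_{r}A_{s}^{(\alpha)}(a_{1},\dots,a_{r};\,b_{1},\dots,b_{s};\,q;\,z)=\sum_{N=0}^{\infty}\frac{(a_{1},\dots,a_{r};q)_{N}}{(b_{1},\dots,b_{s};q)_{N}}q^{\alpha N^{2}}z^{N}. \] A complex matrix $A=(a_{j,k})$ is positive semidefinite if $\sum_{j,k}a_{j,k}w_j\overline{w_k}\ge0$ for all complex $w_j$. *)

From HB Require Import structures.
From mathcomp Require Import all_boot all_order all_algebra.
From mathcomp Require Import all_classical all_reals all_analysis.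
From mathcomp Require Export complex.
Import Order.TTheory GRing.Theory Num.Theory.
Export numFieldTopology.Exports numFieldNormedType.Exports.

Set Implicit Arguments.
Unset Strict Implicit.
Unset Printing Implicit Defensive.

Local Open Scope ring_scope.
Local Open Scope complex_scope.

(* The complex numbers R[i] with the topology / normed structure induced by
   the complex modulus (the canonical numFieldType one), so that limits of
   complex series make sense. *)
HB.instance Definition _ (R : rcfType) := PseudoPointedMetric.copy R[i] (R[i])^o.
HB.instance Definition _ (R : rcfType) := NormedModule.copy R[i] (R[i])^o.

Definition qpoch (R : rcfType) (a q : R[i]) (N : nat) : R[i] :=
  \prod_(k < N) (1 - a * q ^+ k).

Definition qpochs (R : rcfType) (s : seq R[i]) (q : R[i]) (N : nat) : R[i] :=
  \prod_(x <- s) qpoch x q N.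

Definition qA_term (R : realType) (a b : seq R[i]) (q alpha : R) (z : R[i])
  (N : nat) : R[i] :=
  qpochs a q%:C N / qpochs b q%:C N * (powR q (alpha * (N ^ 2)%:R))%:C * z ^+ N.

Definition qA (R : realType) (a b : seq R[i]) (q alpha : R) (z : R[i]) : R[i] :=
  limn (series (qA_term a b q alpha z)).

(* Positive semidefinite complex matrix:  sum_{j,k} A_{j,k} w_j conj(w_k) >= 0
   for all complex w (>= 0 in the order of R[i]: real and nonnegative). *)
Definition psd (R : rcfType) (n : nat) (A : 'M[R[i]]_n) : Prop :=
  forall w : 'I_n -> R[i], 0 <= \sum_(j < n) \sum_(k < n) A j k * w j * (w k)^*.

(* Each entry of the matrix is a product over l of kernels
   (j, k) |-> sum_N t_(l,N) (z_(j,l) conj z_(k,l))^N with nonnegative coefficients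
   t_(l,N) = (a;q)_N / (b;q)_N * q^(alpha N^2).  Multiplying a positive semidefinite
   kernel F by the rank-one kernel (x_j conj x_k)^N gives the quadratic form of F at
   the rescaled vector (w_j x_j^N), so every truncation of the product of series is
   positive semidefinite (a Schur product argument), and the matrix is the entrywise
   limit of these truncations.  The series converge: for alpha = 0 by the disc
   hypothesis, and for alpha > 0 because |(a;q)_N / (b;q)_N| grows at most
   geometrically while q^(alpha N^2) = (q^(alpha N))^N decays faster than any
   geometric sequence. *)

From mathcomp Require Import all_boot all_order all_algebra.
From mathcomp Require Import all_classical all_reals all_analysis.
From mathcomp Require Import ring lra.
Import Order.TTheory GRing.Theory Num.Theory.
Local Open Scope ring_scope.
Local Open Scope complex_scope.
Local Open Scope classical_set_scope.

Set Implicit Arguments.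
Unset Strict Implicit.
Unset Printing Implicit Defensive.

Section ComplexModulus.
Variable R : rcfType.
Implicit Types (x y : R[i]) (r : R).

Lemma normr_normc x : `|x| = (Normc.normc x)%:C.
Proof. by case: x => a b; rewrite normc_def. Qed.

Lemma normc_ge0 x : 0 <= Normc.normc x.
Proof. by case: x => a b; exact: sqrtr_ge0. Qed.

Lemma normc_real r : Normc.normc r%:C = `|r|.
Proof. by rewrite /= expr0n addr0 sqrtr_sqr. Qed.

Lemma normcX x k : Normc.normc (x ^+ k) = Normc.normc x ^+ k.
Proof. by apply: complexI; rewrite rmorphXn -!normr_normc normrX. Qed.

Lemma normc_prod (I : Type) (s : seq I) (F : I -> R[i]) :
  Normc.normc (\prod_(i <- s) F i) = \prod_(i <- s) Normc.normc (F i).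
Proof.
apply: complexI; rewrite rmorph_prod -normr_normc normr_prod.
by under eq_bigr do rewrite normr_normc.
Qed.

Lemma lerB_normc x y : Normc.normc x - Normc.normc y <= Normc.normc (x - y).
Proof. by rewrite -lecR rmorphB /= -!normr_normc lerB_dist. Qed.

Lemma ler_Re_normc x : `|complex.Re x| <= Normc.normc x.
Proof.
case: x => a b /=; rewrite -sqrtr_sqr ler_sqrt ?addr_ge0 ?sqr_ge0 //.
by rewrite lerDl sqr_ge0.
Qed.

Lemma ler_Im_normc x : `|complex.Im x| <= Normc.normc x.
Proof.
case: x => a b /=; rewrite -sqrtr_sqr ler_sqrt ?addr_ge0 ?sqr_ge0 //.
by rewrite lerDr sqr_ge0.
Qed.

End ComplexModulus.

Section ComplexSeries.
Variable R : realType.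
Local Notation C := R[i].

Lemma cvg_realC (u : R^nat) (l : R) :
  u n @[n --> \oo] --> l -> (u n)%:C @[n --> \oo] --> l%:C.
Proof.
move=> /cvgrPdist_lt ul; apply/cvgrPdist_lt => e.
rewrite ltcE => /andP[/eqP eIm eRe_gt0].
near=> n; rewrite -rmorphB /= normr_normc normc_real ltcE /= eIm eqxx /=.
by near: n; exact: ul eRe_gt0.
Unshelve. all: by end_near.
Qed.

(* [R[i]] is not a complete normed space for the library, so convergence is
   obtained from the real and imaginary parts. *)
Lemma series_normc_le_cvg (u : C^nat) (v : R^nat) :
  (forall n, Normc.normc (u n) <= v n) -> cvgn (series v) -> cvgn (series u).
Proof.
move=> uv cv.
have v_ge0 n : 0 <= v n := le_trans (normc_ge0 _) (uv n).
have part_cvg (p : C -> R) : (forall x, `|p x| <= Normc.normc x) ->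
    cvgn (series (fun n => p (u n))).
  move=> p_le; apply: normed_cvg; apply: (series_le_cvg _ v_ge0 _ cv) => n.
    exact: normr_ge0.
  exact: le_trans (p_le _) (uv n).
have -> : series u = fun n => (series (fun n => complex.Re (u n)) n)%:C +
    'i * (series (fun n => complex.Im (u n)) n)%:C.
  apply/funext => n; rewrite /series /= !rmorph_sum mulr_sumr -big_split /=.
  by apply: eq_bigr => k _; rewrite -complexE.
apply/cvg_ex; eexists; apply: cvgD; first exact/cvg_realC/part_cvg/ler_Re_normc.
by apply: cvgM; [exact: cvg_cst | exact/cvg_realC/part_cvg/ler_Im_normc].
Qed.

End ComplexSeries.

Section EventualBounds.
Variable R : realType.

Lemma geometric_eventually_le (c r e : R) : `|r| < 1 -> 0 < e ->
  exists K, forall k, (K <= k)%N -> c * r ^+ k <= e.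
Proof.
move=> r_lt1 e_gt0; have /cvgrPdist_lt/(_ e e_gt0) [K _ small] := cvg_geometric c r_lt1.
exists K => k /small /=; rewrite sub0r normrN => /(le_lt_trans (ler_norm _)).
exact: ltW.
Qed.

Lemma eventually_le_scale (f g : R^nat) K :
  (forall n, (K <= n)%N -> f n <= g n) -> (forall n, 0 < g n) ->
  exists c, forall n, f n <= c * g n.
Proof.
move=> fg g_gt0; pose s := \sum_(i < K) `|f i| / g i.
have s_ge0 : 0 <= s by apply: sumr_ge0 => i _; rewrite divr_ge0 // ltW.
exists (1 + s) => n; have [Kn|nK] := leqP K n.
  by apply: le_trans (fg n Kn) _; rewrite ler_peMl ?lerDl // ltW.
apply: le_trans (ler_norm (f n)) _.
rewrite -[`|f n|](divfK (lt0r_neq0 (g_gt0 n))); apply: ler_wpM2r; first exact: ltW.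
rewrite /s (bigD1 (Ordinal nK)) //= addrCA lerDl addr_ge0 //.
by apply: sumr_ge0 => i _; rewrite divr_ge0 // ltW.
Qed.

End EventualBounds.

Section QPochhammerBounds.
Variable R : realType.
Local Notation C := R[i].
Implicit Types (c : C) (s : seq C) (q : R).

Lemma qpoch_normc_le c q N : 0 <= q <= 1 ->
  Normc.normc (qpoch c q%:C N) <= (1 + Normc.normc c) ^+ N.
Proof.
move=> /andP[q_ge0 q_le1].
rewrite /qpoch normc_prod -[N in _ ^+ N]subn0 -prodr_const_nat big_mkord.
apply: ler_prod => k _; rewrite normc_ge0 /=.
apply: le_trans (le_normcD _ _) _.
rewrite Normc.normc1 lerD2l normcN Normc.normcM normcX normc_real ger0_norm //.
by rewrite ler_piMr ?normc_ge0 // exprn_ile1.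
Qed.

Lemma qpochs_normc_le s q N : 0 <= q <= 1 ->
  Normc.normc (qpochs s q%:C N) <= (\prod_(c <- s) (1 + Normc.normc c)) ^+ N.
Proof.
move=> q01; rewrite /qpochs normc_prod -prodrXl.
by apply: ler_prod => c _; rewrite normc_ge0 qpoch_normc_le.
Qed.

Lemma qpoch_inv_normc_le c q : 0 <= q < 1 ->
  exists2 D, 0 <= D & forall N, Normc.normc (qpoch c q%:C N)^-1 <= D ^+ N.
Proof.
move=> /andP[q_ge0 q_lt1].
pose g k := Normc.normc (1 - c * q%:C ^+ k)^-1.
have q_norm_lt1 : `|q| < 1 by rewrite ger0_norm.
have half_gt0 : 0 < 1 / 2 :> R by rewrite divr_gt0.
have [K small] := geometric_eventually_le (Normc.normc c) q_norm_lt1 half_gt0.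
have g_le2 k : (K <= k)%N -> g k <= 2.
  move=> /small small_k; rewrite /g Normc.normcV.
  have half_le : 1 / 2 <= Normc.normc (1 - c * q%:C ^+ k).
    apply: le_trans (lerB_normc _ _).
    by rewrite Normc.normc1 Normc.normcM normcX normc_real ger0_norm //; lra.
  by rewrite -div1r ler_pdivrMr ?(lt_le_trans _ half_le) //; lra.
(* Factors with k < K may vanish; the junk value [0^-1 = 0] keeps the bound. *)
have [D gD] := eventually_le_scale g_le2 (fun=> ltr0n _ 2).
have D2_ge0 : 0 <= D * 2 by apply: le_trans (gD 0%N); exact: normc_ge0.
exists (D * 2) => // N.
rewrite /qpoch -prodfV normc_prod -[N in _ ^+ N]subn0 -prodr_const_nat big_mkord.
by apply: ler_prod => k _; rewrite normc_ge0 gD.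
Qed.

Lemma qpochs_inv_normc_le s q : 0 <= q < 1 ->
  exists2 D, 0 <= D & forall N, Normc.normc (qpochs s q%:C N)^-1 <= D ^+ N.
Proof.
move=> q01; elim: s => [|c s [Ds Ds_ge0 bs]].
  by exists 1 => // N; rewrite /qpochs big_nil invr1 Normc.normc1 expr1n.
have [Dc Dc_ge0 bc] := qpoch_inv_normc_le c q01.
exists (Dc * Ds) => [|N]; first exact: mulr_ge0.
rewrite /qpochs big_cons invfM Normc.normcM exprMn.
by rewrite ler_pM ?normc_ge0 ?bc ?bs.
Qed.

End QPochhammerBounds.

Section QASeries.
Variable R : realType.
Local Notation C := R[i].

Lemma qA_series_cvg (a b : seq C) (q alpha : R) (x : C) :
  0 < q < 1 -> 0 < alpha -> cvgn (series (qA_term a b q alpha x)).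
Proof.
move=> /andP[q_gt0 q_lt1] alpha_gt0.
have q01 : 0 <= q <= 1 by rewrite !ltW.
have /(qpochs_inv_normc_le b) [D D_ge0 bD] : 0 <= q < 1 by rewrite ltW.
pose A := \prod_(c <- a) (1 + Normc.normc c).
have A_ge0 : 0 <= A by apply: prodr_ge0 => c _; rewrite addr_ge0 ?normc_ge0.
pose rho := powR q alpha.
have rho_ge0 : 0 <= rho := powR_ge0 _ _.
have rho_lt1 : `|rho| < 1.
  have q_nneg : q \is Num.nneg by rewrite nnegrE ltW.
  have one_nneg : (1 : R) \is Num.nneg by rewrite nnegrE.
  by have := gt0_ltr_powR alpha_gt0 q_nneg one_nneg q_lt1; rewrite ger0_norm //= powR1.
pose E := A * D * Normc.normc x.
have E_ge0 : 0 <= E by rewrite !mulr_ge0 ?normc_ge0.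
have term_le N : Normc.normc (qA_term a b q alpha x N) <= (E * rho ^+ N) ^+ N.
  rewrite /qA_term !Normc.normcM normcX normc_real ger0_norm ?powR_ge0 //.
  rewrite powRrM powR_mulrn // /E !exprMn -exprM mulnn [leRHS]mulrAC.
  have coef_le : Normc.normc (qpochs a q%:C N) * Normc.normc (qpochs b q%:C N)^-1
      <= A ^+ N * D ^+ N.
    by apply: ler_pM; rewrite ?normc_ge0 ?qpochs_normc_le.
  apply: ler_pM; [by rewrite !mulr_ge0 ?normc_ge0 ?exprn_ge0 | | | exact: lexx].
    exact: exprn_ge0 (normc_ge0 _).
  by apply: ler_pM; rewrite ?mulr_ge0 ?normc_ge0 ?exprn_ge0 ?coef_le.
have half_gt0 : 0 < 1 / 2 :> R by rewrite divr_gt0.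
have [K small] := geometric_eventually_le E rho_lt1 half_gt0.
have tail_le N : (K <= N)%N -> Normc.normc (qA_term a b q alpha x N) <= (1 / 2) ^+ N.
  move=> /small small_N; apply: le_trans (term_le N) _.
  have Erho_ge0 : 0 <= E * rho ^+ N by rewrite mulr_ge0 ?exprn_ge0.
  by apply: lerXn2r; rewrite ?nnegrE ?(ltW half_gt0).
have [c bound] := eventually_le_scale tail_le (fun N => exprn_gt0 N half_gt0).
apply: (series_normc_le_cvg (v := geometric c (1 / 2))) => //.
by apply: is_cvg_geometric_series; rewrite ger0_norm ?ltW // ltr_pdivrMr // mul1r ltr1n.
Qed.

End QASeries.

Section Limits.
Variables (K : numFieldType) (T : Type) (F : set_system T).
Context {FF : Filter F}.

Lemma cvg_big_sum (I : Type) (r : seq I) (f : I -> T -> K) (l : I -> K) :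
  (forall i, f i t @[t --> F] --> l i) ->
  \sum_(i <- r) f i t @[t --> F] --> \sum_(i <- r) l i.
Proof.
move=> fl; elim: r => [|i r IHr].
  under eq_fun do rewrite big_nil; rewrite big_nil; exact: cvg_cst.
under eq_fun do rewrite big_cons; rewrite big_cons; exact: cvgD.
Qed.

Lemma cvg_big_prod (I : Type) (r : seq I) (f : I -> T -> K) (l : I -> K) :
  (forall i, f i t @[t --> F] --> l i) ->
  \prod_(i <- r) f i t @[t --> F] --> \prod_(i <- r) l i.
Proof.
move=> fl; elim: r => [|i r IHr].
  under eq_fun do rewrite big_nil; rewrite big_nil; exact: cvg_cst.
under eq_fun do rewrite big_cons; rewrite big_cons; exact: cvgM.
Qed.

End Limits.

Lemma cvgn_ge0 (K : numFieldType) (u : K^nat) (l : K) :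
  (forall n, 0 <= u n) -> u n @[n --> \oo] --> l -> 0 <= l.
Proof.
move=> u_ge0 ul.
have normu : u n @[n --> \oo] --> `|l|.
  by rewrite (_ : u = fun n => `|u n|); [exact: cvg_norm | apply/funext => n; rewrite ger0_norm].
rewrite (cvg_unique _ ul normu); [exact: normr_ge0 | exact: norm_hausdorff].
Qed.

Section PositiveKernels.
Variables (R : rcfType) (n : nat).
Local Notation C := R[i].
Implicit Types (F : 'I_n -> 'I_n -> C) (w x : 'I_n -> C).

Definition qform F w : C := \sum_(j < n) \sum_(k < n) F j k * w j * (w k)^*.

Lemma qform1_ge0 w : 0 <= qform (fun _ _ => 1) w.
Proof.
rewrite /qform (_ : \sum_j _ = (\sum_(j < n) w j) * (\sum_(k < n) w k)^*).
  exact: mulcJ_ge0.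
rewrite rmorph_sum mulr_suml; apply: eq_bigr => j _.
by rewrite mulr_sumr; apply: eq_bigr => k _; rewrite mul1r.
Qed.

Lemma qform_sum (G : nat -> 'I_n -> 'I_n -> C) (t : nat -> C) M w :
  qform (fun j k => \sum_(0 <= N < M) t N * G N j k) w =
  \sum_(0 <= N < M) t N * qform (G N) w.
Proof.
rewrite /qform; under eq_bigr => j _ do under eq_bigr => k _ do rewrite !mulr_suml.
under eq_bigr => j _ do rewrite exchange_big /=.
rewrite exchange_big /=; apply: eq_bigr => N _; rewrite mulr_sumr.
by apply: eq_bigr => j _; rewrite mulr_sumr; apply: eq_bigr => k _; rewrite !mulrA.
Qed.

Lemma qform_rank_one_pow F x N w :
  qform (fun j k => (x j * (x k)^*) ^+ N * F j k) w =
  qform F (fun j => w j * x j ^+ N).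
Proof.
apply: eq_bigr => j _; apply: eq_bigr => k _.
by rewrite rmorphM rmorphXn /= exprMn; ring.
Qed.

Lemma qform_series_kernel_ge0 F x (t : nat -> C) M w :
  (forall N, 0 <= t N) -> (forall w, 0 <= qform F w) ->
  0 <= qform (fun j k => (\sum_(0 <= N < M) t N * (x j * (x k)^*) ^+ N) * F j k) w.
Proof.
move=> t_ge0 F_psd.
have -> : (fun j k => (\sum_(0 <= N < M) t N * (x j * (x k)^*) ^+ N) * F j k) =
    fun j k => \sum_(0 <= N < M) t N * ((x j * (x k)^*) ^+ N * F j k).
  by do 2!apply/funext => ?; rewrite mulr_suml; under eq_bigr do rewrite -mulrA.
rewrite qform_sum; apply: sumr_ge0 => N _.
by rewrite qform_rank_one_pow mulr_ge0 ?t_ge0 ?F_psd.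
Qed.

Lemma qform_prod_series_kernel_ge0 (I : Type) (s : seq I) (t : I -> nat -> C)
    (x : I -> 'I_n -> C) M w :
  (forall i N, 0 <= t i N) ->
  0 <= qform (fun j k =>
         \prod_(i <- s) \sum_(0 <= N < M) t i N * (x i j * (x i k)^*) ^+ N) w.
Proof.
move=> t_ge0; elim: s w => [|i s IHs] w.
  by rewrite /qform; under eq_bigr do under eq_bigr do rewrite big_nil; exact: qform1_ge0.
under [X in qform X]eq_fun => j do under eq_fun => k do rewrite big_cons.
exact: qform_series_kernel_ge0.
Qed.

End PositiveKernels.

Theorem mainTheorem15 (R : realType) (m n : nat)
  (q alpha Rad : 'I_m -> R) (a b : 'I_m -> seq R[i])
  (z : 'I_n -> 'I_m -> R[i]) :
  (forall l, 0 < q l < 1) ->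
  (forall l, 0 <= alpha l) ->
  (forall l (N : nat), 0 <= qpochs (a l) (q l)%:C N / qpochs (b l) (q l)%:C N) ->
  (forall l, alpha l = 0 ->
     [/\ Rad l < 1,
         (forall w : R[i], `|w| < (Rad l ^+ 2)%:C ->
            cvgn (series (qA_term (a l) (b l) (q l) 0 w)))
       & (forall j, `|z j l| < (Rad l)%:C)]) ->
  psd (\matrix_(j < n, k < n)
         \prod_(l < m) qA (a l) (b l) (q l) (alpha l) (z j l * (z k l)^*)).
Proof.
move=> q01 alpha_ge0 coef_ge0 disc_cvg w.
have series_cvg l j k :
    cvgn (series (qA_term (a l) (b l) (q l) (alpha l) (z j l * (z k l)^*))).
  have := alpha_ge0 l; rewrite le_eqVlt => /predU1P[alpha0|]; last exact: qA_series_cvg.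
  have [_ cvg_disc z_disc] := disc_cvg l (esym alpha0); rewrite -alpha0.
  by apply: cvg_disc; rewrite normrM normcJ expr2 rmorphM ltr_pM.
pose t l N := qpochs (a l) (q l)%:C N / qpochs (b l) (q l)%:C N *
  (powR (q l) (alpha l * (N ^ 2)%:R))%:C.
have t_ge0 l N : 0 <= t l N by rewrite mulr_ge0 ?coef_ge0 // ler0c powR_ge0.
apply: (@cvgn_ge0 _ (fun M => qform (fun j k => \prod_(l < m)
  series (qA_term (a l) (b l) (q l) (alpha l) (z j l * (z k l)^*)) M) w)).
  by move=> M; exact: (qform_prod_series_kernel_ge0 _ (fun l j => z j l) M w t_ge0).
apply: cvg_big_sum => j; apply: cvg_big_sum => k; rewrite mxE.
apply: cvgM; [apply: cvgM; [|exact: cvg_cst] | exact: cvg_cst].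
by apply: cvg_big_prod => l; exact: series_cvg.
Qed.
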